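(* For every graph $G$ and every independent set $I$ in $G$ we have $\mu_\alpha(G-N[I])\leq\mu_\alpha(G)$.
   Context: All graphs are finite and simple; the null graph is allowed. $N[I]$ is the closed neighborhood of $I$ (the vertices of $I$ together with all their neighbors), and $G-N[I]$ is obtained by deleting these vertices. For a graph $H$, $\alpha(H)$ is the maximum size of an independent set, $i(H)$ the minimum size of an inclusion-maximal independent set (both $0$ for the null graph), and $\mu_\alpha(H)=\alpha(H)-i(H)$. *)

From mathcomp Require Import all_boot all_order all_algebra.
Set Implicit Arguments. Unset Strict Implicit. Unset Printing Implicit Defensive.

(* A finite simple graph: vertex type T (finType), adjacency relation e,
   assumed symmetric and irreflexive (hypotheses in the theorem).
   Induced subgraphs are represented by their vertex set S : {set T}. *)

Section Graphs.
Variables (T : finType) (e : rel T).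

Definition independent (I : {set T}) : bool :=
  [forall x in I, forall y in I, ~~ e x y].

Definition indep_in (S I : {set T}) : bool := (I \subset S) && independent I.

Definition maximal_indep_in (S I : {set T}) : bool :=
  indep_in S I && [forall J : {set T}, (I \proper J) ==> ~~ indep_in S J].

Definition alpha_in (S : {set T}) : nat :=
  \max_(I : {set T} | indep_in S I) #|I|.

(* i(G[S]) : minimum size of an inclusion-maximal independent set
   (the set of candidates is nonempty; the bound #|T| is never attained
   except trivially, and gives 0 for the null graph since set0 is then
   the unique maximal independent set). *)
Definition imin_in (S : {set T}) : nat :=
  \big[minn/#|T|]_(I : {set T} | maximal_indep_in S I) #|I|.

Definition mu_alpha_in (S : {set T}) : int :=
  ((alpha_in S)%:Z - (imin_in S)%:Z)%R.

Definition closed_nbhd (I : {set T}) : {set T} :=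
  I :|: [set y | [exists x in I, e x y]].

End Graphs.

(* Write S for the vertex set of G - N[I].  If B is independent in G - N[I],
   then B and I are disjoint and no edge joins them, so B :|: I is independent
   in G; hence alpha(G - N[I]) + |I| <= alpha(G).  If moreover A is maximal
   independent in G - N[I], then A :|: I is maximal independent in G: a vertex
   outside A :|: I either lies in S, where it cannot be added to A, or lies in
   N[I] \ I, where it has a neighbour in I.  Taking A of size i(G - N[I])
   gives i(G) <= i(G - N[I]) + |I|, and subtracting the two inequalities
   yields the claim. *)

From mathcomp Require Import all_boot all_order all_algebra zify.
Import Order.TTheory.

Section IndependentSets.
Set Implicit Arguments.
Variables (T : finType) (e : rel T).
Implicit Types (S A B J : {set T}).

Lemma independentP J : reflect {in J &, forall x y, ~~ e x y} (independent e J).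
Proof.
apply: (iffP forall_inP) => [indJ x y xJ yJ | indJ x xJ].
  exact: (forall_inP (indJ x xJ)).
by apply/forall_inP => y yJ; apply: indJ.
Qed.

Lemma independentS A B : A \subset B -> independent e B -> independent e A.
Proof.
move=> sAB /independentP indB; apply/independentP => x y xA yA.
by apply: indB; apply: (subsetP sAB).
Qed.

Lemma maximal_indep_inP S A :
  reflect (indep_in e S A /\ forall v, v \in S -> v \notin A -> ~~ independent e (v |: A))
          (maximal_indep_in e S A).
Proof.
apply: (iffP andP) => -[indA maxA]; split=> //.
  move=> v vS vA; have /implyP := forallP maxA (v |: A).
  rewrite properUr ?sub1set // /indep_in subUset sub1set vS.
  by case/andP: indA => -> _ /(_ isT).
apply/forallP => J; apply/implyP => /properP[sAJ [v vJ vA]].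
apply/negP => /andP[sJS indJ].
have vS : v \in S by apply: (subsetP sJS).
by case/negP: (maxA v vS vA); apply: independentS indJ; rewrite subUset sub1set vJ.
Qed.

Lemma alpha_in_ge S B : indep_in e S B -> #|B| <= alpha_in e S.
Proof. exact: leq_bigmax_cond. Qed.

Lemma alpha_in_attained S : exists2 B, indep_in e S B & alpha_in e S = #|B|.
Proof.
have indS0 : indep_in e S set0.
  by rewrite /indep_in sub0set; apply/independentP => x y; rewrite inE.
have [|B indB alphaB] := @eq_bigmax_cond _ (indep_in e S) (fun B => #|B|).
  by apply/card_gt0P; exists set0.
by exists B.
Qed.

Lemma maximum_indep_in_maximal S B :
  indep_in e S B -> alpha_in e S = #|B| -> maximal_indep_in e S B.
Proof.
move=> indB alphaB; rewrite /maximal_indep_in indB.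
apply/forallP => J; apply/implyP => ltBJ; apply/negP => /alpha_in_ge.
by rewrite alphaB leqNgt proper_card.
Qed.

Lemma imin_in_le S A : maximal_indep_in e S A -> imin_in e S <= #|A|.
Proof. exact: (bigmin_le_cond (T := nat)). Qed.

Lemma imin_in_attained S : exists2 A, maximal_indep_in e S A & imin_in e S = #|A|.
Proof.
have [B indB alphaB] := alpha_in_attained S.
have [|A maxA iminA] := eq_bigmin (T := nat) (x := #|T|) _ _ (fun A : {set T} => #|A|)
  (maximum_indep_in_maximal indB alphaB).
  by move=> A _; apply: max_card.
by exists A.
Qed.

End IndependentSets.

Section RemovingClosedNeighbourhood.
Set Implicit Arguments.
Variables (T : finType) (e : rel T) (I : {set T}).
Hypotheses (e_sym : symmetric e) (indI : independent e I).
Implicit Types (A B : {set T}).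

Let S := ~: closed_nbhd e I.

Lemma in_compl_closed_nbhd x : x \in S -> x \notin I /\ {in I, forall y, ~~ e y x}.
Proof.
rewrite !inE negb_or => /andP[xI /exists_inP noAdj]; split=> // y yI.
by apply/negP => eyx; apply: noAdj; exists y.
Qed.

Lemma card_setU_closed_nbhd B : B \subset S -> #|B :|: I| = #|B| + #|I|.
Proof.
move=> sBS; suff /eqP disjBI : B :&: I == set0 by rewrite cardsU disjBI cards0 subn0.
apply/set0Pn => -[x]; rewrite inE => /andP[/(subsetP sBS)/in_compl_closed_nbhd[xI _]].
exact/negP.
Qed.

Lemma indep_in_setU_closed_nbhd B : indep_in e S B -> indep_in e [set: T] (B :|: I).
Proof.
case/andP=> sBS /independentP indB; rewrite /indep_in subsetT.
have noAdj x y : x \in B -> y \in I -> ~~ e y x.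
  by move=> /(subsetP sBS)/in_compl_closed_nbhd[_]; apply.
apply/independentP => x y; rewrite !inE => /orP[xB|xI] /orP[yB|yI].
- exact: indB.
- by rewrite e_sym; apply: noAdj.
- exact: noAdj.
- exact: (independentP _ _ indI).
Qed.

Lemma maximal_indep_in_setU_closed_nbhd A :
  maximal_indep_in e S A -> maximal_indep_in e [set: T] (A :|: I).
Proof.
case/maximal_indep_inP => indA maxA; apply/maximal_indep_inP.
split=> [|v _]; first exact: indep_in_setU_closed_nbhd.
rewrite inE negb_or => /andP[vA vI]; apply/negP => indJ.
have [vS | vN] := boolP (v \in S).
  by case/negP: (maxA v vS vA); apply: independentS indJ; rewrite setUA subsetUl.
move: vN; rewrite !inE negbK (negbTE vI) => /exists_inP[y yI eyv].
have /independentP/(_ y v) := indJ.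
by rewrite !inE yI eqxx !orbT eyv => /(_ isT isT).
Qed.

Lemma alpha_in_compl_closed_nbhd : alpha_in e S + #|I| <= alpha_in e [set: T].
Proof.
have [B indB ->] := alpha_in_attained e S.
rewrite -card_setU_closed_nbhd; last by case/andP: indB.
exact/alpha_in_ge/indep_in_setU_closed_nbhd.
Qed.

Lemma imin_in_compl_closed_nbhd : imin_in e [set: T] <= imin_in e S + #|I|.
Proof.
have [A maxA ->] := imin_in_attained e S.
rewrite -card_setU_closed_nbhd; last by case/andP: maxA => /andP[].
exact/imin_in_le/maximal_indep_in_setU_closed_nbhd.
Qed.

End RemovingClosedNeighbourhood.

Local Open Scope ring_scope.

Theorem lemma4 (T : finType) (e : rel T)
  (e_sym : symmetric e) (e_irr : irreflexive e)
  (I : {set T}) (hI : independent e I) :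
  mu_alpha_in e (~: closed_nbhd e I) <= mu_alpha_in e [set: T].
Proof.
have alphaI := alpha_in_compl_closed_nbhd I e_sym hI.
have iminI := imin_in_compl_closed_nbhd I e_sym hI.
rewrite /mu_alpha_in; lia.
Qed.
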